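(* Fix a reflection matrix $\mathbf\Phi$ and suppose problem (SDR3.3) has an optimal solution. Then there exists an optimal solution $(\{\mathbf W_k^\star\},\mathbf R_0^\star,u^\star)$ of (SDR3.3) with $\mathbf R_0^\star=\mathbf 0$.
   Context: Let $M,N,K\ge1$ be integers and $\mathcal K=\{1,\dots,K\}$. Fixed data: $\mathbf G\in\mathbb C^{N\times M}$, $\mathbf h_{\mathrm d,k}\in\mathbb C^{M}$, $\mathbf h_{\mathrm r,k}\in\mathbb C^{N}$ ($k\in\mathcal K$), thresholds $\Gamma_k>0$, noise powers $\sigma_k^2>0$, power budget $P_0>0$, an angle $\theta$, spacing $d>0$ and wavelength $\lambda>0$. A reflection matrix is $\mathbf\Phi=\mathrm{diag}(\mathbf v)$, $\mathbf v\in\mathbb C^N$, $|v_n|=1$. For given $\mathbf\Phi$: $\mathbf h_k=\mathbf h_{\mathrm d,k}+\mathbf G^H\mathbf\Phi^H\mathbf h_{\mathrm r,k}$, $\mathbf H_k=\mathbf h_k\mathbf h_k^H$. Let $\mathbf a(\theta)\in\mathbb C^N$ have entries $e^{j2\pi (n-1)d\sin\theta/\lambda}$, $n=1,\dots,N$, and $\dot{\mathbf a}(\theta)$ its derivative in $\theta$; put $\mathbf b=\mathbf G^T\mathbf\Phi^T\mathbf a(\theta)$, $\dot{\mathbf b}=\mathbf G^T\mathbf\Phi^T\dot{\mathbf a}(\theta)$, $\mathbf B=\mathbf b\mathbf b^T$, $\dot{\mathbf B}=\dot{\mathbf b}\mathbf b^T+\mathbf b\dot{\mathbf b}^T$. For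 Hermitian $\mathbf R$ and $u\in\mathbb R$ let $$\mathcal M(\mathbf R,u)=\begin{bmatrix}\mathrm{tr}(\dot{\mathbf B}\mathbf R\dot{\mathbf B}^H)-u & \mathrm{tr}(\mathbf B\mathbf R\dot{\mathbf B}^H)\\ \mathrm{tr}(\dot{\mathbf B}\mathbf R\mathbf B^H) & \mathrm{tr}(\mathbf B\mathbf R\mathbf B^H)\end{bmatrix}.$$ Problem (SDR3.3) (fixed $\mathbf\Phi$): maximize $u$ over Hermitian $\mathbf W_k\succeq\mathbf 0$, $\mathbf R_0\succeq\mathbf 0$, $u\in\mathbb R$, subject to $\mathcal M(\sum_k\mathbf W_k+\mathbf R_0,u)\succeq\mathbf 0$, $(1+\tfrac1{\Gamma_k})\mathrm{tr}(\mathbf H_k\mathbf W_k)-\mathrm{tr}(\mathbf H_k(\sum_i\mathbf W_i+\mathbf R_0))\ge\sigma_k^2$ for all $k$, and $\sum_k\mathrm{tr}(\mathbf W_k)+\mathrm{tr}(\mathbf R_0)\le P_0$. *)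

From HB Require Import structures.
From mathcomp Require Import all_boot all_order all_algebra.
From mathcomp Require Import all_classical all_reals all_analysis.
From mathcomp Require Import complex.
Set Implicit Arguments. Unset Strict Implicit. Unset Printing Implicit Defensive.
Import Order.TTheory GRing.Theory Num.Theory.
Local Open Scope ring_scope.
Local Open Scope complex_scope.

Section ISAC.
Variable R : realType.
Local Notation C := R[i].

Definition hmx m n (A : 'M[C]_(m, n)) : 'M[C]_(n, m) := (map_mx Num.conj A)^T.

(* Hermitian positive semidefinite: A^H = A and v^H A v >= 0 for all v
   (the order on C is the usual partial order: z >= 0 iff z is real nonneg) *)
Definition psd n (A : 'M[C]_n) : Prop :=
  hmx A = A /\ forall v : 'cV[C]_n, 0 <= (hmx v *m A *m v) 0 0.

Definition Phimx N (v : 'I_N -> C) : 'M[C]_N := diag_mx (\row_i v i).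

(* phase of the n-th entry (n zero-based, i.e. paper's n-1) *)
Definition phase (d lam : R) (n : nat) (t : R) : R :=
  2 * pi * n%:R * d * sin t / lam.

Definition steer N (d lam theta : R) : 'cV[C]_N :=
  \col_(n < N) (cos (phase d lam n theta) +i* sin (phase d lam n theta)).

Definition steer_dot N (d lam theta : R) : 'cV[C]_N :=
  \col_(n < N) (derive1 (fun t => cos (phase d lam n t)) theta
               +i* derive1 (fun t => sin (phase d lam n t)) theta).

Section Problem.
Variables (M N K : nat).
Variables (G : 'M[C]_(N, M)) (hd : 'I_K -> 'cV[C]_M) (hr : 'I_K -> 'cV[C]_N).
Variables (Gamma sigma2 : 'I_K -> R) (P0 theta d lam : R).
Variable (v : 'I_N -> C).

Definition hk (k : 'I_K) : 'cV[C]_M :=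
  hd k + hmx G *m hmx (Phimx v) *m hr k.
Definition Hk (k : 'I_K) : 'M[C]_M := hk k *m hmx (hk k).

Definition bvec : 'cV[C]_M := G^T *m (Phimx v)^T *m steer N d lam theta.
Definition bdot : 'cV[C]_M := G^T *m (Phimx v)^T *m steer_dot N d lam theta.
Definition Bmx : 'M[C]_M := bvec *m bvec^T.
Definition Bdot : 'M[C]_M := bdot *m bvec^T + bvec *m bdot^T.

Definition FIM (Rm : 'M[C]_M) (u : R) : 'M[C]_2 :=
  \matrix_(i < 2, j < 2)
    if (i : nat) == 0%N then
      (if (j : nat) == 0%N then \tr (Bdot *m Rm *m hmx Bdot) - u%:C
       else \tr (Bmx *m Rm *m hmx Bdot))
    else
      (if (j : nat) == 0%N then \tr (Bdot *m Rm *m hmx Bmx)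
       else \tr (Bmx *m Rm *m hmx Bmx)).

Definition feasible (W : 'I_K -> 'M[C]_M) (R0 : 'M[C]_M) (u : R) : Prop :=
  [/\ forall k, psd (W k),
      psd R0,
      psd (FIM (\sum_k W k + R0) u),
      forall k, (sigma2 k)%:C <=
                (1 + (Gamma k)^-1)%:C * \tr (Hk k *m W k)
                - \tr (Hk k *m (\sum_i W i + R0))
    & \sum_k \tr (W k) + \tr R0 <= P0%:C].

Definition optimal (W : 'I_K -> 'M[C]_M) (R0 : 'M[C]_M) (u : R) : Prop :=
  feasible W R0 u /\
  forall W' R0' u', feasible W' R0' u' -> u' <= u.

End Problem.
End ISAC.

From HB Require Import structures.
From mathcomp Require Import all_boot all_order all_algebra.
From mathcomp Require Import all_classical all_reals all_analysis.
From mathcomp Require Import complex.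
Import Order.TTheory GRing.Theory Num.Theory.
Local Open Scope ring_scope.
Local Open Scope complex_scope.

(* The dedicated radar covariance R0 can always be absorbed into
   one of the communication covariances: given a feasible point (W, R0, u),
   put W'_k0 := W_k0 + R0 and W'_k := W_k otherwise.  Then
   - the total covariance sum_k W'_k + 0 equals sum_k W_k + R0, so the Fisher
     matrix constraint and the interference terms are unchanged;
   - the total power is unchanged, by linearity of the trace;
   - the useful-signal term tr(H_k W'_k) can only grow, because H_k = h_k h_k^H
     and R0 is positive semidefinite, so tr(H_k R0) = h_k^H R0 h_k >= 0.
   Hence (W', 0, u) is feasible with the same objective value u, so it is
   optimal whenever (W, R0, u) is. *)

Section PSD.
Variable R : realType.
Local Notation C := R[i].

Lemma hmxD n (A B : 'M[C]_n) : hmx (A + B) = hmx A + hmx B.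
Proof. by apply/matrixP => i j; rewrite !mxE rmorphD. Qed.

Lemma hmx0 n : hmx (0 : 'M[C]_n) = 0.
Proof. by apply/matrixP => i j; rewrite !mxE rmorph0. Qed.

Lemma psd0 n : psd (0 : 'M[C]_n).
Proof. by split; [rewrite hmx0 | move=> x; rewrite mulmx0 mul0mx mxE]. Qed.

Lemma psdD n (A B : 'M[C]_n) : psd A -> psd B -> psd (A + B).
Proof.
move=> [hA pA] [hB pB]; split; first by rewrite hmxD hA hB.
by move=> x; rewrite mulmxDr mulmxDl mxE addr_ge0.
Qed.

(* For a rank-one channel matrix h h^H, tr(h h^H A) = h^H A h >= 0. *)
Lemma tr_rank1_psd n (h : 'cV[C]_n) (A : 'M[C]_n) :
  psd A -> 0 <= \tr (h *m hmx h *m A).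
Proof. by move=> [_ pA]; rewrite -mulmxA mxtrace_mulC trace_mx11; exact: pA. Qed.

End PSD.

Section Absorb.
Variables (R : realType) (M N K : nat).
Local Notation C := R[i].
Variables (G : 'M[C]_(N, M)) (hd : 'I_K -> 'cV[C]_M) (hr : 'I_K -> 'cV[C]_N).
Variables (Gamma sigma2 : 'I_K -> R) (P0 theta d lam : R) (v : 'I_N -> C).

Definition absorb (W : 'I_K -> 'M[C]_M) (X : 'M[C]_M) (k0 : 'I_K) k :=
  W k + (if k == k0 then X else 0).

Lemma sum_absorb W X k0 : \sum_k absorb W X k0 k = \sum_k W k + X.
Proof. by rewrite big_split /= -big_mkcond big_pred1_eq. Qed.

Lemma feasible_absorb W R0 u k0 :
  (forall k, 0 <= Gamma k) ->
  feasible G hd hr Gamma sigma2 P0 theta d lam v W R0 u ->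
  feasible G hd hr Gamma sigma2 P0 theta d lam v (absorb W R0 k0) 0 u.
Proof.
move=> Gamma_ge0 [pW pR0 pFIM sinr power].
have total : \sum_k absorb W R0 k0 k + 0 = \sum_k W k + R0.
  by rewrite addr0 sum_absorb.
split.
- move=> k; apply: psdD => //; case: (k == k0) => //; exact: psd0.
- exact: psd0.
- by rewrite total.
- move=> k; rewrite total; apply: le_trans (sinr k) _.
  have weight_ge0 : 0 <= (1 + (Gamma k)^-1)%:C.
    by rewrite lecE /= eqxx /= addr_ge0 // invr_ge0.
  have gain_ge0 : 0 <= \tr (Hk G hd hr v k *m (if k == k0 then R0 else 0)).
    by case: (k == k0); [exact: tr_rank1_psd | rewrite mulmx0 mxtrace0].
  by rewrite lerD2r /absorb mulmxDr mxtraceD mulrDr lerDl mulr_ge0.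
- by rewrite -raddf_sum /= -mxtraceD total mxtraceD raddf_sum.
Qed.

End Absorb.
Arguments absorb {R M K}.

Theorem proposition7 (R : realType) (M N K : nat)
  (G : 'M[R[i]]_(N, M)) (hd : 'I_K -> 'cV[R[i]]_M) (hr : 'I_K -> 'cV[R[i]]_N)
  (Gamma sigma2 : 'I_K -> R) (P0 theta d lam : R) (v : 'I_N -> R[i]) :
  (0 < M)%N -> (0 < N)%N -> (0 < K)%N ->
  (forall k, 0 < Gamma k) -> (forall k, 0 < sigma2 k) -> 0 < P0 ->
  0 < d -> 0 < lam ->
  (forall n, `|v n| = 1) ->
  (exists W R0 u, optimal G hd hr Gamma sigma2 P0 theta d lam v W R0 u) ->
  exists W u, optimal G hd hr Gamma sigma2 P0 theta d lam v W 0 u.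
Proof.
move=> _ _ K_gt0 Gamma_gt0 _ _ _ _ _ [W [R0 [u [feas opt]]]].
have Gamma_ge0 k : 0 <= Gamma k by exact: ltW.
exists (absorb W R0 (Ordinal K_gt0)), u; split; last exact: opt.
exact: feasible_absorb Gamma_ge0 feas.
Qed.
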